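(* Let $S=\{18,26,30,59,68,70,87,90,91,93,96,99,100\}$. For every $n$ with $1\le n\le 100$ and $n\notin S$, the center $X_n$ lies inside angle $A$ in every isosceles triangle $ABC$ with $b=c>a$. For each $n\in S$, it is not the case that $X_n$ lies inside angle $A$ in every such triangle.
   Context: $X_n$ denotes the $n$-th triangle center listed in Kimberling's Encyclopedia of Triangle Centers (ETC), given by barycentric coordinates in terms of $a=BC$, $b=CA$, $c=AB$. A point is inside angle $A$ if it lies in the open convex region bounded by the rays $AB$ and $AC$; for a point with barycentric coordinates $(u:v:w)$ this holds iff $v(u+v+w)>0$ and $w(u+v+w)>0$. *)

From Stdlib Require Import Reals List.
Open Scope R_scope.

(** Kimberling's ETC centers X(1)..X(100).

  A triangle center X(n) is given by a barycentric center function
  f_n(a,b,c) = N_n(a,b,c) / D_n(a,b,c) (in terms of the side lengths and of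
  the angles A, B, C), and X(n) = f_n(a,b,c) : f_n(b,c,a) : f_n(c,a,b).
  [etc n a b c A B C] is the pair (N_n, D_n) of the first barycentric
  coordinate.  Where ETC lists *trilinears* x(a,b,c), the barycentric
  function is a * x(a,b,c) (written as [a * ...] below).
  To handle the (projectively meaningful) case where a denominator vanishes
  (e.g. X(100) = a/(b-c) : ... when b = c), the barycentric triple is taken
  with denominators cleared:  (N1 D2 D3 : D1 N2 D3 : D1 D2 N3). *)

Definition angle (a b c : R) : R := acos ((b ^ 2 + c ^ 2 - a ^ 2) / (2 * b * c)).

Definition etc (n : nat) (a b c A B C : R) : R * R :=
  match n with
  | 1%nat => (a * 1, 1)
  | 2%nat => (1, 1)
  | 3%nat => (a * cos A, 1)
  | 4%nat => (a * 1, cos A)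
  | 5%nat => (a * cos (B - C), 1)
  | 6%nat => (a * a, 1)
  | 7%nat => (1, b + c - a)
  | 8%nat => (b + c - a, 1)
  | 9%nat => (a * (b + c - a), 1)
  | 10%nat => (a * (b * c * (b + c)), 1)
  | 11%nat => (a * (1 - cos (B - C)), 1)
  | 12%nat => (a * (1 + cos (B - C)), 1)
  | 13%nat => (a * 1, sin (A + PI / 3))
  | 14%nat => (a * 1, sin (A - PI / 3))
  | 15%nat => (a * sin (A + PI / 3), 1)
  | 16%nat => (a * sin (A - PI / 3), 1)
  | 17%nat => (a * 1, sin (A + PI / 6))
  | 18%nat => (a * 1, sin (A - PI / 6))
  | 19%nat => (a * sin A, cos A)
  | 20%nat => (a * (cos A - cos B * cos C), 1)
  | 21%nat => (a * 1, cos B + cos C)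
  | 22%nat => (a * (a * (b ^ 4 + c ^ 4 - a ^ 4)), 1)
  | 23%nat => (a * (a * (b ^ 4 + c ^ 4 - a ^ 4 - b ^ 2 * c ^ 2)), 1)
  | 24%nat => (a * cos (2 * A), cos A)
  | 25%nat => (a * (sin A * sin A), cos A)
  | 26%nat => (a * (a * (b ^ 2 * cos (2 * B) + c ^ 2 * cos (2 * C)
                         - a ^ 2 * cos (2 * A))), 1)
  | 27%nat => (a * 1, cos A * (b + c))
  | 28%nat => (a * sin A, cos A * (b + c))
  | 29%nat => (a * 1, cos A * (cos B + cos C))
  | 30%nat => (a * (cos A - 2 * cos B * cos C), 1)
  | 31%nat => (a * a ^ 2, 1)
  | 32%nat => (a * a ^ 3, 1)
  | 33%nat => (a * (cos A + 1), cos A)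
  | 34%nat => (a * (cos A - 1), cos A)
  | 35%nat => (a * (1 + 2 * cos A), 1)
  | 36%nat => (a * (1 - 2 * cos A), 1)
  | 37%nat => (a * (b + c), 1)
  | 38%nat => (a * (b ^ 2 + c ^ 2), 1)
  | 39%nat => (a * (a * (b ^ 2 + c ^ 2)), 1)
  | 40%nat => (a * (cos B + cos C - cos A - 1), 1)
  | 41%nat => (a * (a ^ 2 * (b + c - a)), 1)
  | 42%nat => (a * (a * (b + c)), 1)
  | 43%nat => (a * (a * b + a * c - b * c), 1)
  | 44%nat => (a * (b + c - 2 * a), 1)
  | 45%nat => (a * (2 * b + 2 * c - a), 1)
  | 46%nat => (a * (cos B + cos C - cos A), 1)
  | 47%nat => (a * cos (2 * A), 1)
  | 48%nat => (a * sin (2 * A), 1)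
  | 49%nat => (a * cos (3 * A), 1)
  | 50%nat => (a * sin (3 * A), 1)
  | 51%nat => (a * (a ^ 2 * cos (B - C)), 1)
  | 52%nat => (a * (cos (2 * A) * cos (B - C)), 1)
  | 53%nat => (a * (sin A * cos (B - C)), cos A)
  | 54%nat => (a * 1, cos (B - C))
  | 55%nat => (a * (a * (b + c - a)), 1)
  | 56%nat => (a * a, b + c - a)
  | 57%nat => (a * 1, b + c - a)
  | 58%nat => (a * a, b + c)
  | 59%nat => (a * 1, 1 - cos (B - C))
  | 60%nat => (a * 1, 1 + cos (B - C))
  | 61%nat => (a * cos (A - PI / 3), 1)
  | 62%nat => (a * cos (A + PI / 3), 1)
  | 63%nat => (a * cos A, sin A)
  | 64%nat => (a * 1, cos A - cos B * cos C)
  | 65%nat => (a * (cos B + cos C), 1)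
  | 66%nat => (a * 1, a * (b ^ 4 + c ^ 4 - a ^ 4))
  | 67%nat => (a * 1, a * (b ^ 4 + c ^ 4 - a ^ 4 - b ^ 2 * c ^ 2))
  | 68%nat => (a * cos A, cos (2 * A))
  | 69%nat => (b ^ 2 + c ^ 2 - a ^ 2, 1)
  | 70%nat => (a * 1, a * (b ^ 2 * cos (2 * B) + c ^ 2 * cos (2 * C)
                            - a ^ 2 * cos (2 * A)))
  | 71%nat => (a * ((b + c) * cos A), 1)
  | 72%nat => (a * ((b + c) * cos A), sin A)
  | 73%nat => (a * ((b + c) * cos A), b + c - a)
  | 74%nat => (a * 1, cos A - 2 * cos B * cos C)
  | 75%nat => (a * 1, a ^ 2)
  | 76%nat => (a * 1, a ^ 3)
  | 77%nat => (a * cos A, cos A + 1)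
  | 78%nat => (a * cos A, cos A - 1)
  | 79%nat => (a * 1, 1 + 2 * cos A)
  | 80%nat => (a * 1, 1 - 2 * cos A)
  | 81%nat => (a * 1, b + c)
  | 82%nat => (a * 1, b ^ 2 + c ^ 2)
  | 83%nat => (a * 1, a * (b ^ 2 + c ^ 2))
  | 84%nat => (a * 1, cos B + cos C - cos A - 1)
  | 85%nat => (1, a * (b + c - a))
  | 86%nat => (1, b + c)
  | 87%nat => (a * 1, a * b + a * c - b * c)
  | 88%nat => (a * 1, b + c - 2 * a)
  | 89%nat => (a * 1, 2 * b + 2 * c - a)
  | 90%nat => (a * 1, cos B + cos C - cos A)
  | 91%nat => (a * 1, cos (2 * A))
  | 92%nat => (a * 1, sin (2 * A))
  | 93%nat => (a * 1, cos (3 * A))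
  | 94%nat => (a * 1, sin (3 * A))
  | 95%nat => (1, a ^ 2 * (b ^ 2 + c ^ 2) - (b ^ 2 - c ^ 2) ^ 2)
  | 96%nat => (a * 1, cos (2 * A) * cos (B - C))
  | 97%nat => (a * cos A, sin A * cos (B - C))
  | 98%nat => (a * (b * c), b ^ 4 + c ^ 4 - a ^ 2 * b ^ 2 - a ^ 2 * c ^ 2)
  | 99%nat => (a * (b * c), b ^ 2 - c ^ 2)
  | 100%nat => (a * 1, b - c)
  | _ => (0, 1)
  end.

Definition etc_fun (n : nat) (a b c : R) : R * R :=
  etc n a b c (angle a b c) (angle b c a) (angle c a b).

Definition X (n : nat) (a b c : R) : R * R * R :=
  let (N1, D1) := etc_fun n a b c in
  let (N2, D2) := etc_fun n b c a in
  let (N3, D3) := etc_fun n c a b in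
  (N1 * D2 * D3, D1 * N2 * D3, D1 * D2 * N3).

Definition inside_angle_A (p : R * R * R) : Prop :=
  let '(u, v, w) := p in
  v * (u + v + w) > 0 /\ w * (u + v + w) > 0.

Definition S_exc : list nat :=
  (18 :: 26 :: 30 :: 59 :: 68 :: 70 :: 87 :: 90 :: 91 :: 93 :: 96 :: 99 :: 100 :: nil)%nat.

(** X(n) lies inside angle A in every isosceles triangle with b = c > a
    (a > 0 makes the side lengths a, b, b a nondegenerate triangle). *)
Definition inside_all_isosceles (n : nat) : Prop :=
  forall a b : R, 0 < a -> a < b -> inside_angle_A (X n a b b).

(* Write a = 2 b t, so that 0 < t < 1/2: the base angles are B = C = acos t (between pi/3
   and pi/2) and the apex angle is A = acos (1 - 2 t^2).  Since b = c, the last two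
   barycentrics of X_n coincide, and X_n lies inside angle A exactly when D2 <> 0 and
   D1 N2 (N1 D2 + 2 D1 N2) > 0, where (N_i, D_i) are the numerator/denominator pairs of the
   three coordinates.  Expanding the trigonometric functions turns these into polynomials in
   b, t, sin B = sqrt (1 - t^2) and sqrt 3, whose signs on 0 < t < 1/2 follow from explicit
   factorizations.  For each exceptional center a single triangle violates the criterion:
   for X59, X99 and X100 the second coordinate vanishes identically, for X70 the apex angle
   pi/4 makes D2 vanish, and for the others the product is not positive. *)

From Stdlib Require Import Reals List Lra Psatz Nsatz.
Open Scope R_scope.

Lemma inside_angle_A_sym N1 D1 N2 D2 N3 D3 :
  N3 = N2 -> D3 = D2 ->
  inside_angle_A (N1 * D2 * D3, D1 * N2 * D3, D1 * D2 * N3) <->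
  D2 <> 0 /\ 0 < D1 * N2 * (N1 * D2 + 2 * D1 * N2).
Proof.
  intros -> ->. unfold inside_angle_A.
  replace (D1 * N2 * D2 * (N1 * D2 * D2 + D1 * N2 * D2 + D1 * D2 * N2))
    with (D2 ^ 2 * (D1 * N2 * (N1 * D2 + 2 * D1 * N2))) by ring.
  replace (D1 * D2 * N2 * (N1 * D2 * D2 + D1 * N2 * D2 + D1 * D2 * N2))
    with (D2 ^ 2 * (D1 * N2 * (N1 * D2 + 2 * D1 * N2))) by ring.
  split.
  - intros [H _]. split.
    + intros ->. lra.
    + nra.
  - intros [HD H].
    assert (0 < D2 ^ 2) by (rewrite <- Rsqr_pow2; apply Rsqr_pos_lt, HD).
    split; nra.
Qed.

Lemma not_inside_angle_A_D1_0 N1 D1 N2 D2 N3 D3 :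
  D1 = 0 -> ~ inside_angle_A (N1 * D2 * D3, D1 * N2 * D3, D1 * D2 * N3).
Proof. intros ->. unfold inside_angle_A. lra. Qed.

Lemma inside_angle_A_of_closed_forms d2 d1 n2 k N1 D1 N2 D2 N3 D3 :
  N3 = N2 -> D3 = D2 ->
  D2 = d2 -> D1 = d1 -> N2 = n2 -> N1 * D2 + 2 * D1 * N2 = k ->
  d2 <> 0 -> 0 < d1 * n2 * k ->
  inside_angle_A (N1 * D2 * D3, D1 * N2 * D3, D1 * D2 * N3).
Proof.
  intros HN HD -> -> -> Hk Hd2 Hpos.
  apply inside_angle_A_sym; [exact HN | exact HD |]. rewrite Hk. auto.
Qed.

Definition inside_isosceles (n : nat) : Prop :=
  forall b t, 0 < b -> 0 < t -> t < 1 / 2 -> inside_angle_A (X n (2 * b * t) b b).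

Lemma inside_all_isosceles_of n : inside_isosceles n -> inside_all_isosceles n.
Proof.
  intros H a b Ha Hab.
  replace a with (2 * b * (a / (2 * b))) by (field; lra).
  apply H; [lra | apply Rdiv_lt_0_compat; lra |].
  apply (Rmult_lt_reg_r (2 * b)); [lra |]. field_simplify; lra.
Qed.

Lemma not_inside_all_isosceles_at n b t : 0 < b -> 0 < t -> t < 1 / 2 ->
  ~ inside_angle_A (X n (2 * b * t) b b) -> ~ inside_all_isosceles n.
Proof. intros Hb Ht0 Ht1 Hout H. apply Hout, H; nra. Qed.

Lemma cos_3a x : cos (3 * x) = 4 * cos x ^ 3 - 3 * cos x.
Proof.
  replace (3 * x) with (2 * x + x) by ring.
  rewrite cos_plus, cos_2a_cos, sin_2a.
  replace (2 * sin x * cos x * sin x) with (2 * cos x * (sin x)²) by (unfold Rsqr; ring).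
  rewrite sin2. unfold Rsqr. ring.
Qed.

Lemma sin_3a x : sin (3 * x) = 3 * sin x - 4 * sin x ^ 3.
Proof.
  replace (3 * x) with (2 * x + x) by ring.
  rewrite sin_plus, cos_2a_sin, sin_2a.
  replace (2 * sin x * cos x * cos x) with (2 * sin x * (cos x)²) by (unfold Rsqr; ring).
  rewrite cos2. unfold Rsqr. ring.
Qed.

Lemma sin_acos_pow2 t : -1 <= t <= 1 -> sin (acos t) = sqrt (1 - t ^ 2).
Proof. intros Ht. rewrite sin_acos by exact Ht. unfold Rsqr. f_equal. ring. Qed.

Lemma sin_acos_1_sub_2sqr t : 0 <= t <= 1 ->
  sin (acos (1 - 2 * t ^ 2)) = 2 * t * sqrt (1 - t ^ 2).
Proof.
  intros Ht. rewrite sin_acos by nra.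
  replace (1 - (1 - 2 * t ^ 2)²) with (2 * t * (2 * t) * (1 - t ^ 2)) by (unfold Rsqr; ring).
  rewrite sqrt_mult_alt, sqrt_square by nra. reflexivity.
Qed.

Lemma angle_isosceles_apex b t : b <> 0 -> angle (2 * b * t) b b = acos (1 - 2 * t ^ 2).
Proof. intros Hb. unfold angle. f_equal. field. exact Hb. Qed.

Lemma angle_isosceles_base_r b t : b <> 0 -> t <> 0 -> angle b b (2 * b * t) = acos t.
Proof. intros Hb Ht. unfold angle. f_equal. field. auto. Qed.

Lemma angle_isosceles_base_l b t : b <> 0 -> t <> 0 -> angle b (2 * b * t) b = acos t.
Proof. intros Hb Ht. unfold angle. f_equal. field. auto. Qed.

Lemma sqrt_1_sub_pow2_pos t : -1 < t < 1 -> 0 < sqrt (1 - t ^ 2).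
Proof. intros Ht. apply sqrt_lt_R0. nra. Qed.

Lemma sqrt_1_sub_pow2_sqr t : -1 <= t <= 1 -> sqrt (1 - t ^ 2) * sqrt (1 - t ^ 2) = 1 - t ^ 2.
Proof. intros Ht. apply sqrt_sqrt. nra. Qed.

Ltac sqrt_facts t :=
  pose proof (sqrt_1_sub_pow2_pos t ltac:(lra));
  pose proof (sqrt_1_sub_pow2_sqr t ltac:(lra));
  pose proof Rlt_sqrt3_0; pose proof (sqrt_sqrt 3 ltac:(lra));
  set (s := sqrt (1 - t ^ 2)) in *; set (r3 := sqrt 3) in *.

Lemma sin_base_sub_pi3_pos t : 0 < t -> t < 1 / 2 -> 0 < sqrt (1 - t ^ 2) - sqrt 3 * t.
Proof.
  intros Ht0 Ht1. sqrt_facts t.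
  enough (r3 * t < s) by lra.
  apply Rsqr_incrst_0; unfold Rsqr; nra.
Qed.

Lemma sin_pi3_sub_apex_pos t : 0 < t -> t < 1 / 2 ->
  0 < sqrt 3 * (1 - 2 * t ^ 2) - 2 * t * sqrt (1 - t ^ 2).
Proof.
  intros Ht0 Ht1. sqrt_facts t.
  enough (2 * t * s < r3 * (1 - 2 * t ^ 2)) by lra.
  assert (0 < 1 - 4 * t ^ 2) by nra.
  apply Rsqr_incrst_0; unfold Rsqr; nra.
Qed.

Lemma sin_base_sub_pi6_pos t : 0 < t -> t < 1 / 2 -> 0 < sqrt 3 * sqrt (1 - t ^ 2) - t.
Proof.
  intros Ht0 Ht1. sqrt_facts t.
  enough (t < r3 * s) by lra.
  apply Rsqr_incrst_0; unfold Rsqr; nra.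
Qed.

Lemma sin_apex_lt_sqrt3 t : 0 < t -> t < 1 -> 2 * t * sqrt (1 - t ^ 2) < sqrt 3.
Proof.
  intros Ht0 Ht1. sqrt_facts t.
  assert (1 < r3) by nra.
  pose proof (pow2_ge_0 (t - s)).
  nra.
Qed.

(* Introduces s := sin B = sqrt (1 - t^2) and r3 := sqrt 3; on a goal about
   [X n (2 * b * t) b b] every center function then becomes a polynomial in b, t, s, r3. *)
Ltac isosceles_reduce :=
  match goal with
  | |- context [X _ (2 * ?b * ?t) ?b ?b] =>
    cbv beta iota zeta delta [X etc_fun etc];
    rewrite ?angle_isosceles_apex, ?angle_isosceles_base_r, ?angle_isosceles_base_l by lra;
    rewrite ?Rminus_diag, ?cos_0;
    rewrite ?cos_2a_cos, ?sin_2a, ?cos_3a, ?sin_3a, ?cos_plus, ?sin_plus, ?cos_minus, ?sin_minus,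
            ?cos_PI3, ?sin_PI3, ?cos_PI6, ?sin_PI6;
    rewrite ?cos_acos, ?sin_acos_1_sub_2sqr, ?sin_acos_pow2 by nra;
    sqrt_facts t
  end.

Ltac sign_leaf := first [ lra | nra ].

Ltac sign_pos d :=
  unfold Rgt;
  lazymatch d with
  | O => sign_leaf
  | S ?d' =>
    lazymatch goal with
    | |- 0 < _ * _ => first [ apply Rmult_lt_0_compat; [sign_pos d' | sign_pos d']
                            | apply Rmult_neg_neg; [sign_neg d' | sign_neg d']
                            | sign_leaf ]
    | |- 0 < _ + _ => first [ apply Rplus_lt_0_compat; [sign_pos d' | sign_pos d'] | sign_leaf ]
    | |- 0 < - _ => apply Ropp_0_gt_lt_contravar; sign_neg d'
    | |- 0 < _ ^ _ => first [ apply pow_lt; sign_pos d' | sign_leaf ]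
    | |- _ => sign_leaf
    end
  end
with sign_neg d :=
  unfold Rgt;
  lazymatch d with
  | O => sign_leaf
  | S ?d' =>
    lazymatch goal with
    | |- _ * _ < 0 => first [ apply Rmult_pos_neg; [sign_pos d' | sign_neg d']
                            | apply Rmult_neg_pos; [sign_neg d' | sign_pos d']
                            | sign_leaf ]
    | |- _ + _ < 0 => first [ apply Rplus_neg_neg; [sign_neg d' | sign_neg d'] | sign_leaf ]
    | |- - _ < 0 => apply Ropp_lt_gt_0_contravar; sign_pos d'
    | |- _ => sign_leaf
    end
  end.

Ltac sign_nonzero :=
  first [ apply Rgt_not_eq; sign_pos 6%nat | apply Rlt_not_eq; sign_neg 6%nat ].

(* nsatz would also try to use the inequality hypotheses, and it reads neither [^] nor the
   constant [/ 2], which it treats as an indeterminate subject to [2 * / 2 = 1]. *)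
Ltac ring_isosceles :=
  repeat match goal with
         | x := _ |- _ => clearbody x
         | H : _ < _ |- _ => clear H
         | H : _ > _ |- _ => clear H
         end;
  cbn [pow] in *;
  solve [ ring | assert (2 * / 2 = 1) by (field; lra); unfold Rdiv in *; nsatz ].

(* [d2], [d1], [n2], [k]: closed forms of D2, D1, N2 and N1 D2 + 2 D1 N2, factored so that
   their signs are evident. *)
Ltac inside_by_closed_forms d2 d1 n2 k :=
  apply (inside_angle_A_of_closed_forms d2 d1 n2 k);
  [ ring | ring | ring_isosceles | ring_isosceles | ring_isosceles | ring_isosceles
  | sign_nonzero | sign_pos 12%nat ].

Ltac inside_by_signs :=
  rewrite inside_angle_A_sym by ring; split; [sign_nonzero | sign_pos 12%nat].

Lemma X11_inside_isosceles : inside_isosceles 11.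
Proof.
  intros b t Hb Ht0 Ht1.
  isosceles_reduce.
  inside_by_closed_forms 1 1 (b * (1 + t) * (1 - 2 * t) ^ 2) (2 * b * (1 + t) * (1 - 2 * t) ^ 2).
Qed.

Lemma X14_inside_isosceles : inside_isosceles 14.
Proof.
  intros b t Hb Ht0 Ht1.
  pose proof (sin_base_sub_pi3_pos t Ht0 Ht1).
  pose proof (sin_pi3_sub_apex_pos t Ht0 Ht1).
  isosceles_reduce.
  inside_by_closed_forms
    ((s - r3 * t) / 2)
    ((2 * t * s - r3 * (1 - 2 * t ^ 2)) / 2)
    b
    (b * r3 * s * (r3 * t - s)).
Qed.

Lemma X16_inside_isosceles : inside_isosceles 16.
Proof.
  intros b t Hb Ht0 Ht1.
  pose proof (sin_base_sub_pi3_pos t Ht0 Ht1).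
  isosceles_reduce.
  inside_by_closed_forms 1 1 (b * (s - r3 * t) / 2) (b * s * (s - r3 * t) ^ 2).
Qed.

Lemma X20_inside_isosceles : inside_isosceles 20.
Proof.
  intros b t Hb Ht0 Ht1.
  isosceles_reduce.
  inside_by_closed_forms 1 1 (2 * b * t ^ 3) (2 * b * t * (1 - t ^ 2)).
Qed.

Lemma X22_inside_isosceles : inside_isosceles 22.
Proof.
  intros b t Hb Ht0 Ht1.
  isosceles_reduce.
  inside_by_closed_forms
    1
    1
    (16 * b ^ 6 * t ^ 4)
    (8 * b ^ 6 * t ^ 2 * (1 + 4 * t ^ 2 * (1 - 2 * t ^ 2))).
Qed.

Lemma X23_inside_isosceles : inside_isosceles 23.
Proof.
  intros b t Hb Ht0 Ht1.
  isosceles_reduce.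
  inside_by_closed_forms
    1
    1
    (- (4 * b ^ 6 * t ^ 2 * (1 - 2 * t) * (1 + 2 * t)))
    (- (4 * b ^ 6 * t ^ 2 * ((1 - 2 * t) * (1 + 2 * t)) ^ 2)).
Qed.

Lemma X24_inside_isosceles : inside_isosceles 24.
Proof.
  intros b t Hb Ht0 Ht1.
  isosceles_reduce.
  inside_by_closed_forms
    t
    (1 - 2 * t ^ 2)
    (- (b * (1 - 2 * t ^ 2)))
    (- (2 * b * (1 - t ^ 2) * (1 - 4 * t ^ 2 + 8 * t ^ 4))).
Qed.

Lemma X36_inside_isosceles : inside_isosceles 36.
Proof.
  intros b t Hb Ht0 Ht1.
  isosceles_reduce.
  inside_by_closed_forms 1 1 (b * (1 - 2 * t)) (2 * b * (1 + t) * (1 - 2 * t) ^ 2).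
Qed.

Lemma X43_inside_isosceles : inside_isosceles 43.
Proof.
  intros b t Hb Ht0 Ht1.
  isosceles_reduce.
  inside_by_closed_forms 1 1 (b ^ 3) (b ^ 3 * (2 - 2 * t + 8 * t ^ 2)).
Qed.

Lemma X44_inside_isosceles : inside_isosceles 44.
Proof.
  intros b t Hb Ht0 Ht1.
  isosceles_reduce.
  inside_by_closed_forms 1 1 (- (b ^ 2 * (1 - 2 * t))) (- (2 * b ^ 2 * (1 - 2 * t) ^ 2)).
Qed.

Lemma X46_inside_isosceles : inside_isosceles 46.
Proof.
  intros b t Hb Ht0 Ht1.
  isosceles_reduce.
  inside_by_closed_forms 1 1 (b * (1 - 2 * t ^ 2)) (b * (2 - 2 * t + 4 * t ^ 3)).
Qed.

Lemma X47_inside_isosceles : inside_isosceles 47.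
Proof.
  intros b t Hb Ht0 Ht1.
  isosceles_reduce.
  inside_by_closed_forms
    1
    1
    (- (b * (1 - 2 * t ^ 2)))
    (- (b * (2 * (1 - 2 * t) * (1 + t) + 12 * t ^ 3 + 4 * t ^ 3 * (1 - 2 * t) * (1 + 2 * t)))).
Qed.

Lemma X49_inside_isosceles : inside_isosceles 49.
Proof.
  intros b t Hb Ht0 Ht1.
  isosceles_reduce.
  inside_by_closed_forms
    1
    1
    (- (b * t * (3 - 4 * t ^ 2)))
    (- (4 * b * t * (1 + t ^ 2 + 6 * t ^ 2 * (1 - 2 * t) * (1 + 2 * t) + 16 * t ^ 6))).
Qed.

Lemma X50_inside_isosceles : inside_isosceles 50.
Proof.
  intros b t Hb Ht0 Ht1.
  isosceles_reduce.
  inside_by_closed_forms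
    1
    1
    (- (b * s * (1 - 2 * t) * (1 + 2 * t)))
    (- (2 * b * s * ((1 - 2 * t) * (1 + 2 * t)) ^ 2 * (1 - 2 * t ^ 2))).
Qed.

Lemma X52_inside_isosceles : inside_isosceles 52.
Proof.
  intros b t Hb Ht0 Ht1.
  isosceles_reduce.
  inside_by_closed_forms
    1
    1
    (- (b * t * (1 - 2 * t ^ 2) * (3 - 4 * t ^ 2)))
    (- (4 * b * t * (1 - t ^ 2))).
Qed.

Lemma X62_inside_isosceles : inside_isosceles 62.
Proof.
  intros b t Hb Ht0 Ht1.
  pose proof (sin_base_sub_pi6_pos t Ht0 Ht1).
  pose proof (sin_apex_lt_sqrt3 t Ht0 ltac:(lra)).
  isosceles_reduce.
  inside_by_closed_forms
    1
    1
    (b * (t - r3 * s) / 2)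
    (- (b * s * ((r3 - 2 * t * s) + 2 * r3 * t ^ 2))).
Qed.

Lemma X64_inside_isosceles : inside_isosceles 64.
Proof.
  intros b t Hb Ht0 Ht1.
  isosceles_reduce.
  inside_by_closed_forms (2 * t ^ 3) (1 - 3 * t ^ 2) b (2 * b * (1 - t ^ 2) * (1 - 2 * t ^ 2)).
Qed.

Lemma X66_inside_isosceles : inside_isosceles 66.
Proof.
  intros b t Hb Ht0 Ht1.
  isosceles_reduce.
  inside_by_closed_forms
    (16 * b ^ 5 * t ^ 4)
    (2 * b ^ 5 * t * (1 + (1 - 2 * t) * (1 + 2 * t) * (1 + 4 * t ^ 2)))
    b
    (2 * b ^ 6 * t * (3 + (1 - 2 * t) * (1 + 2 * t) * (1 + 4 * t ^ 2))).
Qed.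

Lemma X67_inside_isosceles : inside_isosceles 67.
Proof.
  intros b t Hb Ht0 Ht1.
  isosceles_reduce.
  inside_by_closed_forms
    (- (4 * b ^ 5 * t ^ 2 * (1 - 2 * t) * (1 + 2 * t)))
    (2 * b ^ 5 * t * (1 - 2 * t) * (1 + 2 * t) * (1 + 4 * t ^ 2))
    b
    (4 * b ^ 6 * t * (1 - 2 * t) * (1 + 2 * t) * (1 + 2 * t ^ 2)).
Qed.

Lemma X69_inside_isosceles : inside_isosceles 69.
Proof.
  intros b t Hb Ht0 Ht1.
  isosceles_reduce.
  inside_by_closed_forms 1 1 (4 * b ^ 2 * t ^ 2) (2 * b ^ 2 * (1 + 2 * t ^ 2)).
Qed.

Lemma X74_inside_isosceles : inside_isosceles 74.
Proof.
  intros b t Hb Ht0 Ht1.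
  isosceles_reduce.
  inside_by_closed_forms
    (- (t * (1 - 2 * t) * (1 + 2 * t)))
    ((1 - 2 * t) * (1 + 2 * t))
    b
    (2 * b * (1 - t ^ 2) * (1 - 2 * t) * (1 + 2 * t)).
Qed.

Lemma X80_inside_isosceles : inside_isosceles 80.
Proof.
  intros b t Hb Ht0 Ht1.
  isosceles_reduce.
  inside_by_closed_forms
    (1 - 2 * t)
    (- ((1 - 2 * t) * (1 + 2 * t)))
    b
    (- (2 * b * (1 - 2 * t) * (1 + t))).
Qed.

Lemma X88_inside_isosceles : inside_isosceles 88.
Proof.
  intros b t Hb Ht0 Ht1.
  isosceles_reduce.
  inside_by_closed_forms
    (- (b * (1 - 2 * t)))
    (2 * b * (1 - 2 * t))
    b
    (2 * b ^ 2 * (1 - 2 * t) * (2 - t)).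
Qed.

Lemma X94_inside_isosceles : inside_isosceles 94.
Proof.
  intros b t Hb Ht0 Ht1.
  isosceles_reduce.
  inside_by_closed_forms
    (- (s * (1 - 2 * t) * (1 + 2 * t)))
    (2 * t * s * (1 - 2 * t) * (1 + 2 * t) * (3 - 4 * t ^ 2))
    b
    (2 * b * t * s * (1 - 2 * t) * (1 + 2 * t) * (5 - 8 * t ^ 2)).
Qed.

Lemma X95_inside_isosceles : inside_isosceles 95.
Proof.
  intros b t Hb Ht0 Ht1.
  isosceles_reduce.
  inside_by_closed_forms
    (4 * b ^ 4 * t ^ 2 * (3 - 4 * t ^ 2))
    (8 * b ^ 4 * t ^ 2)
    1
    (4 * b ^ 4 * t ^ 2 * (7 - 4 * t ^ 2)).
Qed.

Lemma X98_inside_isosceles : inside_isosceles 98.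
Proof.
  intros b t Hb Ht0 Ht1.
  isosceles_reduce.
  inside_by_closed_forms
    (- (4 * b ^ 4 * t ^ 2 * (1 - 2 * t) * (1 + 2 * t)))
    (2 * b ^ 4 * (1 - 2 * t) * (1 + 2 * t))
    (2 * b ^ 3 * t)
    (8 * b ^ 7 * t * (1 - t ^ 2) * (1 - 2 * t) * (1 + 2 * t)).
Qed.

#[local] Hint Resolve
  X11_inside_isosceles X14_inside_isosceles X16_inside_isosceles X20_inside_isosceles
  X22_inside_isosceles X23_inside_isosceles X24_inside_isosceles X36_inside_isosceles
  X43_inside_isosceles X44_inside_isosceles X46_inside_isosceles X47_inside_isosceles
  X49_inside_isosceles X50_inside_isosceles X52_inside_isosceles X62_inside_isosceles
  X64_inside_isosceles X66_inside_isosceles X67_inside_isosceles X69_inside_isosceles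
  X74_inside_isosceles X80_inside_isosceles X88_inside_isosceles X94_inside_isosceles
  X95_inside_isosceles X98_inside_isosceles
  : isosceles.

(* For the centers without a hint, the reduced factors already have evident signs. *)
Lemma inside_isosceles_regular n : (1 <= n <= 100)%nat -> ~ In n S_exc -> inside_isosceles n.
Proof.
  intros Hn Hexc.
  do 101 (destruct n as [|n];
    [ first [ lia
            | solve [auto with isosceles]
            | contradict Hexc; simpl; tauto
            | intros b t Hb Ht0 Ht1; isosceles_reduce; inside_by_signs ]
    | ]).
  lia.
Qed.

Ltac outside_by_signs := rewrite inside_angle_A_sym by ring; intros [_ Hpos]; nra.

Lemma X18_not_inside_all_isosceles : ~ inside_all_isosceles 18.
Proof.
  apply (not_inside_all_isosceles_at 18 1 (9 / 41)); [lra | lra | lra |].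
  isosceles_reduce.
  assert (Hs : s = 40 / 41) by nra.
  rewrite inside_angle_A_sym by ring. intros [_ Hpos]. rewrite Hs in Hpos. nra.
Qed.

Lemma X26_not_inside_all_isosceles : ~ inside_all_isosceles 26.
Proof.
  apply (not_inside_all_isosceles_at 26 1 (1 / 4)); [lra | lra | lra |].
  isosceles_reduce. outside_by_signs.
Qed.

Lemma X30_not_inside_all_isosceles : ~ inside_all_isosceles 30.
Proof.
  apply (not_inside_all_isosceles_at 30 1 (1 / 4)); [lra | lra | lra |].
  isosceles_reduce. outside_by_signs.
Qed.

Lemma X59_not_inside_all_isosceles : ~ inside_all_isosceles 59.
Proof.
  apply (not_inside_all_isosceles_at 59 1 (1 / 4)); [lra | lra | lra |].
  isosceles_reduce. apply not_inside_angle_A_D1_0. ring.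
Qed.

Lemma X68_not_inside_all_isosceles : ~ inside_all_isosceles 68.
Proof.
  apply (not_inside_all_isosceles_at 68 1 (1 / 4)); [lra | lra | lra |].
  isosceles_reduce. outside_by_signs.
Qed.

Lemma X70_not_inside_all_isosceles : ~ inside_all_isosceles 70.
Proof.
  pose proof (sqrt_lt_R0 2 ltac:(lra)). pose proof (sqrt_sqrt 2 ltac:(lra)).
  set (r2 := sqrt 2) in *.
  assert (Hp : 0 < 2 - r2) by nra.
  pose proof (sqrt_lt_R0 _ Hp). pose proof (sqrt_sqrt _ (Rlt_le _ _ Hp)).
  set (t := sqrt (2 - r2) / 2).
  assert (Ht2 : 4 * t ^ 2 = 2 - r2).
  { unfold t. replace (4 * (sqrt (2 - r2) / 2) ^ 2) with (sqrt (2 - r2) * sqrt (2 - r2)) by field.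
    assumption. }
  assert (Ht0 : 0 < t) by (unfold t; lra).
  assert (Ht1 : t < 1 / 2) by nra.
  apply (not_inside_all_isosceles_at 70 1 t); [lra | exact Ht0 | exact Ht1 |].
  isosceles_reduce.
  rewrite inside_angle_A_sym by ring. intros [HD _]. apply HD.
  ring_isosceles.
Qed.

Lemma X87_not_inside_all_isosceles : ~ inside_all_isosceles 87.
Proof.
  apply (not_inside_all_isosceles_at 87 1 (9 / 41)); [lra | lra | lra |].
  isosceles_reduce. outside_by_signs.
Qed.

Lemma X90_not_inside_all_isosceles : ~ inside_all_isosceles 90.
Proof.
  apply (not_inside_all_isosceles_at 90 1 (12 / 37)); [lra | lra | lra |].
  isosceles_reduce. outside_by_signs.
Qed.

Lemma X91_not_inside_all_isosceles : ~ inside_all_isosceles 91.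
Proof.
  apply (not_inside_all_isosceles_at 91 1 (7 / 20)); [lra | lra | lra |].
  isosceles_reduce. outside_by_signs.
Qed.

Lemma X93_not_inside_all_isosceles : ~ inside_all_isosceles 93.
Proof.
  apply (not_inside_all_isosceles_at 93 1 (1 / 4)); [lra | lra | lra |].
  isosceles_reduce. outside_by_signs.
Qed.

Lemma X96_not_inside_all_isosceles : ~ inside_all_isosceles 96.
Proof.
  apply (not_inside_all_isosceles_at 96 1 (7 / 20)); [lra | lra | lra |].
  isosceles_reduce. outside_by_signs.
Qed.

Lemma X99_not_inside_all_isosceles : ~ inside_all_isosceles 99.
Proof.
  apply (not_inside_all_isosceles_at 99 1 (1 / 4)); [lra | lra | lra |].
  isosceles_reduce. apply not_inside_angle_A_D1_0. ring.
Qed.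

Lemma X100_not_inside_all_isosceles : ~ inside_all_isosceles 100.
Proof.
  apply (not_inside_all_isosceles_at 100 1 (1 / 4)); [lra | lra | lra |].
  isosceles_reduce. apply not_inside_angle_A_D1_0. ring.
Qed.

Theorem theorem2p4 :
  (forall n : nat, (1 <= n <= 100)%nat -> ~ In n S_exc -> inside_all_isosceles n) /\
  (forall n : nat, In n S_exc -> ~ inside_all_isosceles n).
Proof.
  split.
  - intros n Hn Hexc. apply inside_all_isosceles_of, inside_isosceles_regular; assumption.
  - intros n Hn. simpl in Hn.
    repeat destruct Hn as [<- | Hn].
    + exact X18_not_inside_all_isosceles.
    + exact X26_not_inside_all_isosceles.
    + exact X30_not_inside_all_isosceles.
    + exact X59_not_inside_all_isosceles.
    + exact X68_not_inside_all_isosceles.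
    + exact X70_not_inside_all_isosceles.
    + exact X87_not_inside_all_isosceles.
    + exact X90_not_inside_all_isosceles.
    + exact X91_not_inside_all_isosceles.
    + exact X93_not_inside_all_isosceles.
    + exact X96_not_inside_all_isosceles.
    + exact X99_not_inside_all_isosceles.
    + exact X100_not_inside_all_isosceles.
    + contradiction.
Qed.
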